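(* Let $X$ be a Banach space such that every bounded linear operator $A:X\to X$ is of the form $A=\lambda I+S$ with $\lambda\in\mathbb{R}$ and $S$ strictly singular. Then $X$ is UALS-saturated.
   Context: $\mathcal{L}(X)$ is the space of bounded linear operators on $X$ with the operator norm. An operator is strictly singular if its restriction to no infinite-dimensional closed subspace is an isomorphism onto its image. Here ''subspace'' means closed infinite-dimensional subspace. $X$ is UALS-saturated if there exists $C>0$ such that for every convex (norm-)compact $W\subset\mathcal{L}(X)$, every $A\in\mathcal{L}(X)$ and $\varepsilon>0$ with the property that for every $x$ in the unit ball of $X$ there is $B\in W$ with $\|(A-B)x\|\le\varepsilon$, it holds that for every subspace $Y$ of $X$ there exist a further subspace $Z\subset Y$ and $B\in W$ with $\|(A-B)|_Z\|_{\mathcal{L}(Z,X)}\le C\varepsilon$. *)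

From HB Require Import structures.
From mathcomp Require Import all_boot all_order all_algebra.
From mathcomp Require Import all_classical all_reals all_analysis.
Set Implicit Arguments. Unset Strict Implicit. Unset Printing Implicit Defensive.
Import Order.TTheory GRing.Theory Num.Theory.
Import numFieldNormedType.Exports.
Local Open Scope classical_set_scope.
Local Open Scope ring_scope.

Section Defs.
Variables (R : realType) (X : normedModType R).

Definition linear_op (A : X -> X) : Prop :=
  forall (a : R) (x y : X), A (a *: x + y) = a *: A x + A y.

Definition bounded_op (A : X -> X) : Prop :=
  linear_op A /\ exists M : R, forall x : X, `|A x| <= M * `|x|.

Definition lin_indep (n : nat) (v : 'I_n -> X) : Prop :=
  forall c : 'I_n -> R, \sum_(i < n) c i *: v i = 0 -> forall i, c i = 0.

(** A "subspace": a closed, infinite-dimensional linear subspace of X. *)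
Definition subspace (Y : set X) : Prop :=
  [/\ Y 0,
      (forall (a : R) (x y : X), Y x -> Y y -> Y (a *: x + y)),
      closed Y &
      (forall n : nat, exists v : 'I_n -> X, (forall i, Y (v i)) /\ lin_indep v)].

(** The restriction of T to Y is an isomorphism onto its image
    (T bounded linear): T is bounded below on Y. *)
Definition iso_on (T : X -> X) (Y : set X) : Prop :=
  exists c : R, 0 < c /\ forall y : X, Y y -> c * `|y| <= `|T y|.

Definition strictly_singular (S : X -> X) : Prop :=
  bounded_op S /\ forall Y : set X, subspace Y -> ~ iso_on S Y.

Definition opnorm_cvg (B : nat -> X -> X) (L : X -> X) : Prop :=
  forall e : R, 0 < e -> exists N : nat, forall n : nat, (N <= n)%N ->
    forall x : X, `|B n x - L x| <= e * `|x|.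

(** Norm-compactness of a set of operators in the (metric) operator-norm
    topology, expressed as sequential compactness. *)
Definition opnorm_compact (W : set (X -> X)) : Prop :=
  forall B : nat -> X -> X, (forall n, W (B n)) ->
    exists (phi : nat -> nat) (L : X -> X),
      (forall m n : nat, (m < n)%N -> (phi m < phi n)%N) /\ W L /\
      opnorm_cvg (fun n => B (phi n)) L.

Definition convex_ops (W : set (X -> X)) : Prop :=
  forall A B : X -> X, W A -> W B -> forall t : R, 0 <= t -> t <= 1 ->
    W (fun x => t *: A x + (1 - t) *: B x).

Definition UALS_saturated : Prop :=
  exists C : R, 0 < C /\
  forall W : set (X -> X), (forall B, W B -> bounded_op B) ->
    convex_ops W -> opnorm_compact W ->
  forall A : X -> X, bounded_op A -> forall eps : R, 0 < eps ->
    (forall x : X, `|x| <= 1 -> exists B, W B /\ `|A x - B x| <= eps) ->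
  forall Y : set X, subspace Y ->
    exists Z : set X, [/\ subspace Z, Z `<=` Y &
      exists B, W B /\ forall z : X, Z z -> `|A z - B z| <= C * eps * `|z|].

End Defs.

(* Let B_0, ..., B_(k-1) be an (eps/3)-net of the compact set W and write
   A - B_i = nu_i I + S_i with S_i strictly singular.  A strictly singular S is
   small on some subspace of any given subspace Y: pick unit vectors y_n with
   |S y_n| tiny, each in the kernels of Hahn-Banach norming functionals of the
   previous ones, so that |c_k| <= 2^k |sum_i c_i y_i| and S has norm at most
   del on the closed span of the y_n.  Iterating over i gives one Z inside Y on
   which every S_i has norm at most eps/3.  Testing the hypothesis at a unit
   vector x of Z gives an element of W that is eps-close to A at x, hence some
   B_i with |(A - B_i) x| <= 4 eps/3, which forces |nu_i| <= 5 eps/3 and then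
   |(A - B_i) z| <= 2 eps |z| on Z. *)

From Pilot Require Import Defs.
From mathcomp Require Import all_boot all_order all_algebra.
From mathcomp Require Import all_classical all_reals all_analysis.
From mathcomp Require Import ring lra.
Import Order.TTheory GRing.Theory Num.Theory.
Import numFieldNormedType.Exports.
Local Open Scope ring_scope.
Local Open Scope classical_set_scope.

Section LinearOperators.
Context {R : realType} {X : normedModType R}.
Implicit Types (T : X -> X) (V : set X).

Lemma linear_op0 T : linear_op T -> T 0 = 0.
Proof.
move=> lT; have := lT 1 0 0; rewrite !scale1r addr0 => T00.
by apply: (addrI (T 0)); rewrite -T00 addr0.
Qed.

Lemma linear_opZ T a x : linear_op T -> T (a *: x) = a *: T x.
Proof. by move=> lT; rewrite -[a *: x]addr0 lT linear_op0 ?addr0. Qed.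

Lemma linear_opD T x y : linear_op T -> T (x + y) = T x + T y.
Proof. by move=> lT; rewrite -[x]scale1r lT !scale1r. Qed.

Lemma linear_opB T x y : linear_op T -> T (x - y) = T x - T y.
Proof. by move=> lT; rewrite addrC -scaleN1r lT scaleN1r addrC. Qed.

Lemma linear_op_sum T (I : Type) (r : seq I) (P : pred I) (F : I -> X) :
  linear_op T -> T (\sum_(i <- r | P i) F i) = \sum_(i <- r | P i) T (F i).
Proof.
move=> lT; elim/big_rec2: _ => [|i _ y _ <-]; first exact: linear_op0.
exact: linear_opD.
Qed.

Lemma bounded_opB {A B : X -> X} :
  bounded_op A -> bounded_op B -> bounded_op (fun x => A x - B x).
Proof.
move=> [lA [MA HA]] [lB [MB HB]]; split.
  by move=> a x y; rewrite lA lB scalerBr opprD addrACA.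
exists (MA + MB) => x; apply: le_trans (ler_normB _ _) _.
by rewrite mulrDl; apply: lerD.
Qed.

Definition linear_set V := V 0 /\ forall (a : R) x y, V x -> V y -> V (a *: x + y).

Lemma linear_setD {V x y} : linear_set V -> V x -> V y -> V (x + y).
Proof. by move=> [_ lV] Vx Vy; rewrite -[x]scale1r; apply: lV. Qed.

Lemma linear_setZ {V} a {x} : linear_set V -> V x -> V (a *: x).
Proof. by move=> [V0 lV] Vx; rewrite -[_ *: _]addr0; apply: lV. Qed.

Lemma linear_setB {V x y} : linear_set V -> V x -> V y -> V (x - y).
Proof.
by move=> lV Vx Vy; apply: linear_setD => //; rewrite -scaleN1r; apply: linear_setZ.
Qed.

Lemma linear_set_sum V (I : Type) (r : seq I) (P : pred I) (F : I -> X) :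
  linear_set V -> (forall i, P i -> V (F i)) -> V (\sum_(i <- r | P i) F i).
Proof.
move=> lV VF; elim/big_rec: _ => [|i y Pi Vy]; first by case: lV.
exact: linear_setD lV (VF i Pi) Vy.
Qed.

Definition linear_form_on V (h : X -> R) :=
  forall a x x', V x -> V x' -> h (a *: x + x') = a * h x + h x'.

Lemma linear_form_on0 {V h} : linear_set V -> linear_form_on V h -> h 0 = 0.
Proof.
move=> [V0 _] hl; have := hl 1 0 0 V0 V0; rewrite scale1r addr0 mul1r => h00.
by apply: (addrI (h 0)); rewrite -h00 addr0.
Qed.

Definition norming_pair V (y : X) (h : X -> R) :=
  [/\ V y, `|y| = 1, linear_form_on V h, forall x, V x -> `|h x| <= `|x| & h y = 1].

Lemma subspace_linear_set {V} : Defs.subspace V -> linear_set V.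
Proof. by case. Qed.

Lemma closureP V z :
  closure V z <-> (forall e : R, 0 < e -> exists w, V w /\ `|z - w| < e).
Proof.
split.
- move=> cl e e0; have [w [Vw bw]] := cl _ (nbhsx_ballx z e e0).
  by exists w; split => //; move: bw; rewrite -ball_normE.
- move=> H B /nbhs_ballP [e e0 sB]; have [w [Vw zw]] := H e e0.
  by exists w; split => //; apply: sB; rewrite -ball_normE.
Qed.

Lemma closedP V :
  closed V <-> (forall z, (forall e : R, 0 < e -> exists w, V w /\ `|z - w| < e) -> V z).
Proof.
split; first by move=> cV z /closureP; apply: cV.
by move=> H z /closureP; apply: H.
Qed.

Lemma closure_linear_set {V} : linear_set V -> linear_set (closure V).
Proof.
move=> lV; split; first exact/subset_closure/lV.1.
move=> a x x' /closureP Vx /closureP Vx'; apply/closureP => e e0.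
have e2 : 0 < e / 2 by rewrite divr_gt0.
have a1 : 0 < `|a| + 1 by rewrite ltr_wpDl.
have [s [Vs xs]] := Vx _ (divr_gt0 e2 a1); have [s' [Vs' xs']] := Vx' _ e2.
exists (a *: s + s'); split; first exact: lV.2.
have -> : a *: x + x' - (a *: s + s') = a *: (x - s) + (x' - s').
  by rewrite scalerBr opprD addrACA.
apply: le_lt_trans (ler_normD _ _) _; rewrite normrZ [e in _ < e]splitr.
apply: ler_ltD => //; apply: le_trans (ler_wpM2l (normr_ge0 a) (ltW xs)) _.
by rewrite mulrCA ger_pMr // ler_pdivrMr // mul1r lerDl.
Qed.

Lemma bounded_op_le_closure T (S : set X) (del : R) :
  bounded_op T -> 0 <= del -> (forall z, S z -> `|T z| <= del * `|z|) ->
  forall z, closure S z -> `|T z| <= del * `|z|.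
Proof.
move=> [lT [M HM]] del0 TS z /closureP Sz; apply/ler_addgt0Pr => e e0.
set K := `|M| + del + 1; have K0 : 0 < K by rewrite ltr_wpDl // addr_ge0.
have [s [Ss zs]] := Sz _ (divr_gt0 e0 K0).
have Tzs : `|T (z - s)| <= `|M| * `|z - s|.
  by apply: le_trans (HM _) _; apply: ler_wpM2r => //; exact: ler_norm.
have Tz : `|T z| <= `|T s| + `|T (z - s)|.
  by rewrite linear_opB // addrC -{1}(subrK (T s) (T z)) ler_normD.
have ns : `|s| <= `|z| + `|z - s| by rewrite -{1}(subKr z s) ler_normB.
have Kzs : K * `|z - s| <= e by rewrite mulrC -ler_pdivlMr // ltW.
have := TS s Ss; have := normr_ge0 (z - s); rewrite /K in Kzs; nra.
Qed.

End LinearOperators.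

Section HahnBanach.
Context {R : realType} {X : normedModType R}.
Variables (V : set X) (y0 : X).
Hypotheses (lV : linear_set V) (Vy0 : V y0) (ny0 : `|y0| = 1).

(* Graphs of norm-dominated partial linear functionals on V, ordered by
   inclusion for Zorn's lemma. *)
Definition dominated_graph (G : set (X * R)) :=
  [/\ (forall x r s, G (x, r) -> G (x, s) -> r = s),
      (forall a x r x' r', G (x, r) -> G (x', r') -> G (a *: x + x', a * r + r')),
      (forall x r, G (x, r) -> V x) &
      (forall x r, G (x, r) -> r <= `|x|)].

Definition base_graph : set (X * R) := [set p | exists t : R, p = (t *: y0, t)].

Lemma dominated_base_graph : dominated_graph base_graph.
Proof.
have y0_neq0 : y0 != 0 by rewrite -normr_eq0 ny0 oner_eq0.
split.
- move=> x r s [t [-> ->]] [u [ts ->]]; move/eqP: ts.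
  by rewrite -subr_eq0 -scalerBl scaler_eq0 (negbTE y0_neq0) orbF subr_eq0 => /eqP.
- by move=> a x r x' r' [t [-> ->]] [u [-> ->]]; exists (a * t + u); rewrite scalerDl scalerA.
- by move=> x r [t [-> _]]; apply: linear_setZ.
- by move=> x r [t [-> ->]]; rewrite normrZ ny0 mulr1 ler_norm.
Qed.

Section Graph.
Context {G : set (X * R)} (dG : dominated_graph G) (baseG : base_graph `<=` G).

Lemma graph0 : G (0, 0).
Proof. by apply: baseG; exists 0; rewrite scale0r. Qed.

Lemma graphZ a {x r} : G (x, r) -> G (a *: x, a * r).
Proof.
by case: dG => _ Gl _ _ Gxr; rewrite -[_ *: _]addr0 -[_ * _]addr0; apply: Gl graph0.
Qed.

Lemma graphB {x r x' r'} : G (x, r) -> G (x', r') -> G (x - x', r - r').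
Proof.
case: dG => _ Gl _ _ Gxr Gxr'; have := Gl (-1) x' r' x r Gxr' Gxr.
by rewrite scaleN1r mulN1r addrC [- r' + _]addrC.
Qed.

Lemma extension_bounds x0 : exists c : R,
  forall x r, G (x, r) -> r - `|x - x0| <= c /\ c <= `|x + x0| - r.
Proof.
case: dG => _ Gl _ Gd.
pose L := [set u | exists x r, G (x, r) /\ u = r - `|x - x0|].
have ubL x' r' : G (x', r') -> ubound L (`|x' + x0| - r').
  move=> Gx' _ [x [r [Gxr ->]]].
  have := Gd _ _ (Gl 1 x r x' r' Gxr Gx'); rewrite scale1r mul1r.
  have : `|x + x'| <= `|x - x0| + `|x' + x0|.
    by rewrite -[x in x + _](subrK x0) -addrA [x0 + _]addrC ler_normD.
  lra.
exists (sup L) => x r Gxr; split.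
  by apply: ub_le_sup; [exists (`|0 + x0| - 0); apply: ubL graph0|exists x, r].
by apply: ge_sup; [exists (0 - `|0 - x0|), 0, 0; split => //; apply: graph0|apply: ubL].
Qed.

Lemma extension_dominated x0 c :
  (forall x r, G (x, r) -> r - `|x - x0| <= c /\ c <= `|x + x0| - r) ->
  forall x r t, G (x, r) -> r + t * c <= `|x + t *: x0|.
Proof.
move=> bounds x r t Gxr; have [->|t0] := eqVneq t 0.
  by rewrite mul0r scale0r !addr0; case: dG => _ _ _; apply.
have -> : `|x + t *: x0| = `|t| * `|t^-1 *: x + x0|.
  by rewrite -normrZ scalerDr scalerA mulfV // scale1r.
have -> : r = t * (t^-1 * r) by rewrite mulrA mulfV // mul1r.
have [tn|tp] := ltrP t 0.
  have := (bounds _ _ (graphZ (- t^-1) Gxr)).1.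
  rewrite scaleNr -opprD normrN mulNr ltr0_norm //; nra.
have := (bounds _ _ (graphZ t^-1 Gxr)).2.
by rewrite ger0_norm //; nra.
Qed.

Lemma dominated_graph_extend x0 : V x0 -> ~ (exists r, G (x0, r)) ->
  exists2 G', dominated_graph G' & G `<=` G' /\ exists c, G' (x0, c).
Proof.
move=> Vx0 nx0; have [Gf Gl GV Gd] := dG.
have [c bounds] := extension_bounds x0.
pose G' := [set p | exists x r t, G (x, r) /\ p = (x + t *: x0, r + t * c)].
exists G'; last first.
  split; first by move=> [x r] Gxr; exists x, r, 0; rewrite scale0r mul0r !addr0.
  by exists c, 0, 0, 1; split; [exact: graph0|rewrite !add0r scale1r mul1r].
split.
- move=> x r s [x1 [r1 [t1 [G1 [-> ->]]]]] [x2 [r2 [t2 [G2 [e12 ->]]]]].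
  have [t12|t12] := eqVneq t1 t2.
    rewrite t12 in e12 *; rewrite (addIr _ e12) in G1.
    by rewrite (Gf _ _ _ G1 G2).
  exfalso; apply: nx0; exists ((t1 - t2)^-1 * (r2 - r1)).
  have -> : x0 = (t1 - t2)^-1 *: (x2 - x1).
    have <- : (t1 - t2) *: x0 = x2 - x1.
      by apply/eqP; rewrite scalerBl subr_eq addrAC -e12 addrAC subrr add0r.
    by rewrite scalerA mulVf ?scale1r // subr_eq0.
  exact: graphZ (graphB G2 G1).
- move=> a x r x' r' [x1 [r1 [t1 [G1 [-> ->]]]]] [x2 [r2 [t2 [G2 [-> ->]]]]].
  exists (a *: x1 + x2), (a * r1 + r2), (a * t1 + t2); split; first exact: Gl.
  by congr pair; [rewrite scalerDr scalerA addrACA -scalerDl|ring].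
- move=> x r [x1 [r1 [t1 [G1 [-> _]]]]].
  by apply: linear_setD => //; [exact: GV G1|exact: linear_setZ].
- by move=> x r [x1 [r1 [t1 [G1 [-> ->]]]]]; apply: extension_dominated.
Qed.

End Graph.

(* Zorn's lemma is applied to the A with A `|` base_graph dominated: the
   union of the empty chain must qualify too. *)
Lemma dominated_graph_chain_union (F : set (set (X * R))) :
  (forall A, F A -> dominated_graph (A `|` base_graph)) -> total_on F subset ->
  dominated_graph ((\bigcup_(A in F) A) `|` base_graph).
Proof.
move=> FP Ftot; set U := _ `|` _.
have two p q : U p -> U q -> exists H, [/\ dominated_graph H, H `<=` U, H p & H q].
  have sub A : F A -> A `|` base_graph `<=` U by move=> FA z [Az|Gz]; [left; exists A|right].
  case=> [[A1 FA1 A1p]|G0p]; case=> [[A2 FA2 A2q]|G0q].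
  - have [s12|s21] := Ftot _ _ FA1 FA2.
    + by exists (A2 `|` base_graph); split; [exact: FP|exact: sub|left; exact: s12|left].
    + by exists (A1 `|` base_graph); split; [exact: FP|exact: sub|left|left; exact: s21].
  - by exists (A1 `|` base_graph); split; [exact: FP|exact: sub|left|right].
  - by exists (A2 `|` base_graph); split; [exact: FP|exact: sub|right|left].
  - by exists base_graph; split => //; [exact: dominated_base_graph|move=> z; right].
split.
- by move=> x r s Ur Us; have [H [[Hf _ _ _] _ Hr Hs]] := two _ _ Ur Us; exact: Hf Hr Hs.
- move=> a x r x' r' Ur Us; have [H [[_ Hl _ _] sH Hr Hs]] := two _ _ Ur Us.
  exact/sH/Hl.
- by move=> x r Ur; have [H [[_ _ HV _] _ Hr _]] := two _ _ Ur Ur; exact: HV Hr.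
- by move=> x r Ur; have [H [[_ _ _ Hd] _ Hr _]] := two _ _ Ur Ur; exact: Hd Hr.
Qed.

Lemma dominated_graph_total : exists2 G, dominated_graph G &
  base_graph `<=` G /\ forall x, V x -> exists r, G (x, r).
Proof.
have [A [dA Amax]] := Zorn_bigcup dominated_graph_chain_union.
have baseA : base_graph `<=` A `|` base_graph by move=> z; right.
exists (A `|` base_graph) => //; split => // x Vx; apply: contrapT => nx.
have [G' dG' [AG' [c G'x]]] := dominated_graph_extend dA baseA x Vx nx.
apply: (Amax G'); last first.
  suff -> : G' `|` base_graph = G' by [].
  by apply/seteqP; split => [z [//|/baseA/AG'//]|z]; left.
split; first by move=> z Az; apply: AG'; left.
by move=> G'A; apply: nx; exists c; left; exact: G'A.
Qed.

Lemma hahn_banach_norming : exists h : X -> R,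
  [/\ linear_form_on V h, forall x, V x -> `|h x| <= `|x| & h y0 = 1].
Proof.
have [G dG [baseG total]] := dominated_graph_total; have [Gf Gl _ Gd] := dG.
pose h x := xget 0 [set r | G (x, r)].
have hG x : V x -> G (x, h x) by move=> /total; exact: xgetPex.
exists h; split.
- move=> a x x' Vx Vx'; apply: (Gf (a *: x + x')); first exact/hG/lV.2.
  exact: Gl (hG _ Vx) (hG _ Vx').
- move=> x /hG Gx; rewrite ler_norml (Gd _ _ Gx) andbT lerNl.
  by have := Gd _ _ (graphZ dG baseG (-1) Gx); rewrite scaleN1r normrN mulN1r.
- by apply: (Gf y0); [exact: hG|apply: baseG; exists 1; rewrite scale1r].
Qed.

End HahnBanach.

Section Kernel.
Context {R : realType} {X : normedModType R}.
Context {V : set X} {h : X -> R} (lV : linear_set V) (hl : linear_form_on V h).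

Lemma kernel_linear_set : linear_set [set x | V x /\ h x = 0].
Proof.
split; first by split; [exact: lV.1|exact: linear_form_on0 lV hl].
move=> a x y [Vx hx] [Vy hy]; split; first exact: lV.2.
by rewrite hl // hx hy mulr0 addr0.
Qed.

Lemma kernel_closed : closed V -> (forall x, V x -> `|h x| <= `|x|) ->
  closed [set x | V x /\ h x = 0].
Proof.
move=> cV hb; apply/closedP => z H.
have Vz : V z by move/closedP: cV; apply=> e /H [w [[Vw _] zw]]; exists w.
split => //; apply/eqP; rewrite -normr_le0; apply/ler_addgt0Pr => e e0; rewrite add0r.
have [w [[Vw hw] zw]] := H e e0; have Vzw := linear_setB lV Vz Vw.
have := hl 1 _ _ Vzw Vw; rewrite scale1r mul1r subrK hw addr0 => ->.
exact: ltW (le_lt_trans (hb _ Vzw) zw).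
Qed.

Lemma kernel_lin_indep m (u : 'I_m.+1 -> X) : (forall i, V (u i)) -> lin_indep u ->
  exists v : 'I_m -> X, (forall i, V (v i) /\ h (v i) = 0) /\ lin_indep v.
Proof.
move=> Vu iu.
have [k hk] : exists k, h (u k) = 0 -> forall j, h (u j) = 0.
  case: (pselect (forall j, h (u j) = 0)) => [h0|/existsNP [k hk]]; first by exists ord0.
  by exists k.
(* When h (u k) = 0, h vanishes on all of u and b = 0 since x / 0 = 0. *)
pose b (i : 'I_m) := h (u (lift k i)) / h (u k).
exists (fun i => (- b i) *: u k + u (lift k i)); split.
  move=> i; split; first exact: lV.2.
  rewrite hl // mulNr /b; have [hk0|hk0] := eqVneq (h (u k)) 0.
    by rewrite !(hk hk0) mulr0 oppr0 add0r.
  by rewrite mulfVK // addNr.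
move=> c csum i.
(* The coefficients of sum_i c i *: v i in the family u. *)
pose d (j : 'I_m.+1) := if unlift k j is Some i then c i else \sum_(i < m) c i * - b i.
have := iu d; rewrite (bigD1_ord k) //= /d unlift_none.
under eq_bigr do rewrite liftK.
move=> /(_ _ (lift k i)); rewrite liftK; apply.
apply: etrans csum; rewrite scaler_suml -big_split /=; apply: eq_bigr => j _.
by rewrite scalerDr scalerA.
Qed.

End Kernel.

Lemma kernel_subspace {R : realType} {X : normedModType R} (V : set X) (h : X -> R) :
  Defs.subspace V -> linear_form_on V h -> (forall x, V x -> `|h x| <= `|x|) ->
  Defs.subspace [set x | V x /\ h x = 0].
Proof.
move=> sV hl hb; have lV := subspace_linear_set sV; case: sV => _ _ cV dimV.
have [K0 Kl] := kernel_linear_set lV hl.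
split => //; first exact: kernel_closed.
by move=> m; have [u [Vu iu]] := dimV m.+1; exact: kernel_lin_indep.
Qed.

Lemma strictly_singular_small_unit {R : realType} {X : normedModType R}
    {T : X -> X} {V : set X} {e : R} :
  strictly_singular T -> Defs.subspace V -> 0 < e ->
  exists y, [/\ V y, `|y| = 1 & `|T y| <= e].
Proof.
move=> [[lT _] nT] sV e0; apply: contrapT => small; apply: (nT V sV).
exists e; split => // y Vy; have [->|y0] := eqVneq y 0; first by rewrite normr0 mulr0.
have ny0 : 0 < `|y| by rewrite normr_gt0.
suff : e < `|T (`|y|^-1 *: y)|.
  by rewrite linear_opZ // normrZ normfV normr_id ltr_pdivlMl // mulrC => /ltW.
rewrite ltNge; apply/negP => le; apply: small; exists (`|y|^-1 *: y).
split => //; first exact: linear_setZ (subspace_linear_set sV) Vy.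
by rewrite normrZ normfV normr_id mulVf // gt_eqF.
Qed.

Section BasicSequence.
Context {R : realType} {X : normedModType R}.
Variables (y : nat -> X) (h : nat -> X -> R) (V : nat -> set X).
Hypotheses (lV : forall n, linear_set (V n))
  (norming : forall n, norming_pair (V n) (y n) (h n))
  (V_succ : forall n, V n.+1 = [set x | V n x /\ h n x = 0]).

Let Vy n : V n (y n). Proof. by case: (norming n). Qed.
Let y_unit n : `|y n| = 1. Proof. by case: (norming n). Qed.
Let hl n : linear_form_on (V n) (h n). Proof. by case: (norming n). Qed.
Let hb n x : V n x -> `|h n x| <= `|x|. Proof. by case: (norming n) => _ _ _ /(_ x). Qed.
Let hy n : h n (y n) = 1. Proof. by case: (norming n). Qed.

Lemma chain_subset k n : (k <= n)%N -> V n `<=` V k.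
Proof.
elim: n => [|n IH]; first by rewrite leqn0 => /eqP ->.
rewrite leq_eqVlt => /orP [/eqP ->//|]; rewrite ltnS V_succ => kn x [Vx _].
exact: IH.
Qed.

Lemma chain_tail_sum_mem k m N (c : nat -> R) :
  (k <= m)%N -> V k (\sum_(m <= i < N) c i *: y i).
Proof.
move=> km; rewrite big_seq; apply: linear_set_sum => // i.
rewrite mem_index_iota => /andP [mi _]; apply: linear_setZ => //.
exact: chain_subset (leq_trans km mi) _ (Vy i).
Qed.

Lemma form_tail_sum {k N} (c : nat -> R) :
  (k < N)%N -> h k (\sum_(k <= i < N) c i *: y i) = c k.
Proof.
move=> kN; rewrite big_ltn // hl //; last exact: chain_tail_sum_mem.
have := chain_tail_sum_mem k.+1 k.+1 N c (leqnn _); rewrite V_succ => -[_ ->].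
by rewrite hy mulr1 addr0.
Qed.

Lemma coef_le_norm_add_head {N} (c : nat -> R) {k} : (k < N)%N ->
  `|c k| <= `|\sum_(0 <= i < N) c i *: y i| + \sum_(0 <= i < k) `|c i|.
Proof.
move=> kN; rewrite -(form_tail_sum c kN).
apply: le_trans (hb _ _ (chain_tail_sum_mem k k N c (leqnn _))) _.
rewrite (big_cat_nat (leq0n k) (ltnW kN)) /=.
set A := \sum_(0 <= i < k) _; set B := \sum_(k <= i < N) _.
rewrite -[B in `|B|](addKr A) [- A + _]addrC.
apply: le_trans (ler_normB _ _) _; apply: lerD => //.
apply: le_trans (ler_norm_sum _ _ _) _; apply: ler_sum => i _.
by rewrite normrZ y_unit mulr1.
Qed.

Lemma sum_coef_le_pow2 {N} (c : nat -> R) {k} : (k <= N)%N ->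
  \sum_(0 <= i < k) `|c i| <= (2 ^+ k - 1) * `|\sum_(0 <= i < N) c i *: y i|.
Proof.
elim: k => [|k IH] kN; first by rewrite big_geq // expr0 subrr mul0r.
rewrite big_nat_recr //= exprS; have := coef_le_norm_add_head c kN; have := IH (ltnW kN).
set w := `|_|; set s := \sum_(0 <= i < k) _; nra.
Qed.

Lemma coef_le_pow2 {N} (c : nat -> R) {k} : (k < N)%N ->
  `|c k| <= 2 ^+ k * `|\sum_(0 <= i < N) c i *: y i|.
Proof.
move=> kN; have := coef_le_norm_add_head c kN; have := sum_coef_le_pow2 c (ltnW kN).
set w := `|_|; set s := \sum_(0 <= i < k) _; nra.
Qed.

Definition seq_span z := exists N (c : nat -> R), z = \sum_(0 <= i < N) c i *: y i.

Lemma sum_pad {N M} (c : nat -> R) : (N <= M)%N ->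
  \sum_(0 <= i < N) c i *: y i = \sum_(0 <= i < M) (if (i < N)%N then c i else 0) *: y i.
Proof.
move=> NM; rewrite (big_cat_nat (leq0n N) NM) /= [X in _ = _ + X]big_nat_cond.
rewrite [X in _ = _ + X]big1 ?addr0; first by apply: eq_big_nat => i /andP [_ ->].
by move=> i /andP [/andP [Ni _] _]; rewrite ltnNge Ni scale0r.
Qed.

Lemma linear_set_seq_span : linear_set seq_span.
Proof.
split; first by exists 0%N, (fun _ => 0); rewrite big_geq.
move=> a _ _ [N1 [c1 ->]] [N2 [c2 ->]].
exists (N1 + N2)%N, (fun i => a * (if (i < N1)%N then c1 i else 0) +
                              (if (i < N2)%N then c2 i else 0)).
rewrite (sum_pad c1 (leq_addr N2 N1)) (sum_pad c2 (leq_addl N1 N2)).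
rewrite scaler_sumr -big_split /=; apply: eq_bigr => i _.
by rewrite scalerDl scalerA.
Qed.

Lemma seq_span_y n : seq_span (y n).
Proof.
exists n.+1, (fun j => (j == n)%:R); rewrite big_nat_recr //= eqxx scale1r.
rewrite big_nat_cond big1 ?add0r // => j /andP [/andP [_ jn] _].
by rewrite (ltn_eqF jn) scale0r.
Qed.

Lemma lin_indep_y n : lin_indep (fun i : 'I_n => y i).
Proof.
case: n => [|m] c csum i; first by case: i.
pose c' (j : nat) := c (inord j).
have c'0 : \sum_(0 <= j < m.+1) c' j *: y j = 0.
  by rewrite big_mkord -[RHS]csum; apply: eq_bigr => j _; rewrite /c' inord_val.
have := coef_le_pow2 c' (ltn_ord i).
by rewrite c'0 normr0 mulr0 normr_le0 /c' inord_val => /eqP.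
Qed.

Lemma closed_span_subspace : Defs.subspace (closure seq_span).
Proof.
have [S0 Sl] := closure_linear_set linear_set_seq_span.
split => //; first exact: closed_closure.
move=> n; exists (fun i : 'I_n => y i); split; last exact: lin_indep_y.
by move=> i; apply/subset_closure/seq_span_y.
Qed.

Lemma closed_span_sub : closed (V 0) -> closure seq_span `<=` V 0.
Proof.
move/closure_id => ->; apply: closureS => _ [N [c ->]].
exact: chain_tail_sum_mem 0%N 0%N N c (leqnn _).
Qed.

Lemma sum_inv_pow2 N : \sum_(0 <= i < N) (2 ^+ i.+1 : R)^-1 = 1 - (2 ^+ N)^-1.
Proof.
elim: N => [|N IH]; first by rewrite big_geq // expr0 invr1 subrr.
rewrite big_nat_recr //= IH exprS; field.
by rewrite expf_neq0 // pnatr_eq0.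
Qed.

Lemma seq_span_op_le (T : X -> X) (del : R) : linear_op T -> 0 <= del ->
  (forall n, `|T (y n)| <= del / (2 ^+ n * 2 ^+ n.+1)) ->
  forall z, seq_span z -> `|T z| <= del * `|z|.
Proof.
move=> lT del0 Ty _ [N [c ->]]; set w := \sum_(0 <= i < N) _.
rewrite linear_op_sum //; apply: le_trans (ler_norm_sum _ _ _) _.
apply: (@le_trans _ _ (\sum_(0 <= i < N) del * `|w| * (2 ^+ i.+1)^-1)).
  rewrite big_nat_cond [X in _ <= X]big_nat_cond.
  apply: ler_sum => i /andP [/andP [_ iN] _].
  rewrite linear_opZ // normrZ; apply: le_trans (ler_wpM2l (normr_ge0 _) (Ty i)) _.
  apply: le_trans (ler_wpM2r _ (coef_le_pow2 c iN)) _.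
    by rewrite divr_ge0 // mulr_ge0 // exprn_ge0.
  rewrite -/w; suff -> : 2 ^+ i * `|w| * (del / (2 ^+ i * 2 ^+ i.+1)) =
    del * `|w| / 2 ^+ i.+1 by [].
  by field; rewrite !expf_neq0 // pnatr_eq0.
rewrite -mulr_sumr sum_inv_pow2 ler_piMr ?mulr_ge0 // lerBlDr lerDl invr_ge0 exprn_ge0.
Qed.

End BasicSequence.

Section SmallOnSubspace.
Context {R : realType} {X : normedModType R}.

Lemma strictly_singular_norming_pair {T : X -> X} {V : set X} {e : R} :
  strictly_singular T -> Defs.subspace V -> 0 < e ->
  exists y h, norming_pair V y h /\ `|T y| <= e.
Proof.
move=> sT sV e0; have [y [Vy y1 Ty]] := strictly_singular_small_unit sT sV e0.
have [h [hl hb hy]] := hahn_banach_norming _ _ (subspace_linear_set sV) Vy y1.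
by exists y, h.
Qed.

Lemma strictly_singular_small_on {T : X -> X} {Y : set X} {del : R} :
  strictly_singular T -> Defs.subspace Y -> 0 < del ->
  exists Z, [/\ Defs.subspace Z, Z `<=` Y & forall z, Z z -> `|T z| <= del * `|z|].
Proof.
(* |c_n| <= 2^n |z| for z = sum_n c_n y_n, so these errors add up to at most del |z|. *)
move=> sT sY del0; pose eps n : R := del / (2 ^+ n * 2 ^+ n.+1).
have step (p : nat * set X) : exists q : X * (X -> R),
    Defs.subspace p.2 -> norming_pair p.2 q.1 q.2 /\ `|T q.1| <= eps p.1.
  have [sV|] := pselect (Defs.subspace p.2); last by exists (0, fun _ => 0).
  have [|y [h yh]] := @strictly_singular_norming_pair T _ (eps p.1) sT sV.
    by rewrite divr_gt0 // mulr_gt0 // exprn_gt0.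
  by exists (y, h).
have [f Hf] := choice step.
pose V := fix V n := if n is n'.+1 then [set x | V n' x /\ (f (n', V n')).2 x = 0] else Y.
pose y n := (f (n, V n)).1; pose h n := (f (n, V n)).2.
have sV n : Defs.subspace (V n).
  elim: n => [//|n IH]; have [[_ _ hl hb _] _] := Hf (n, V n) IH.
  exact: kernel_subspace.
have norming n : norming_pair (V n) (y n) (h n) by case: (Hf (n, V n) (sV n)).
have Ty n : `|T (y n)| <= eps n by case: (Hf (n, V n) (sV n)).
have lV n := subspace_linear_set (sV n).
exists (closure (seq_span y)); split.
- exact: (closed_span_subspace _ h V).
- by apply: (closed_span_sub _ h V) => //; case: sY.
- apply: bounded_op_le_closure; [by case: sT|exact: ltW|].
  by apply: (seq_span_op_le _ h V) => //; [case: sT => -[]|exact: ltW].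
Qed.

End SmallOnSubspace.

Section Saturation.
Context {R : realType} {X : normedModType R}.

Lemma strictly_singular_family_small_on {k} {T : nat -> X -> X} {Y : set X} {del : R} :
  (forall i, (i < k)%N -> strictly_singular (T i)) -> Defs.subspace Y -> 0 < del ->
  exists Z, [/\ Defs.subspace Z, Z `<=` Y &
    forall i z, (i < k)%N -> Z z -> `|T i z| <= del * `|z|].
Proof.
move=> sT sY del0; elim: k sT => [|k IH] sT; first by exists Y; split => // i z.
have [Z1 [sZ1 Z1Y T1]] := IH (fun i ik => sT i (ltnW ik)).
have [Z2 [sZ2 Z21 T2]] := strictly_singular_small_on (sT k (ltnSn k)) sZ1 del0.
exists Z2; split => // [z /Z21/Z1Y //|i z].
rewrite ltnS leq_eqVlt => /orP [/eqP ->|ik]; [exact: T2|move/Z21; exact: T1].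
Qed.

Lemma subspace_unit {Z : set X} : Defs.subspace Z -> exists x, Z x /\ `|x| = 1.
Proof.
move=> sZ; have lZ := subspace_linear_set sZ; case: sZ => _ _ _ dimZ.
have [v [Zv iv]] := dimZ 1%N.
have v0 : v ord0 != 0.
  apply/eqP => v0; have := iv (fun _ => 1); rewrite big_ord1 v0 scaler0.
  by move=> /(_ erefl ord0) /eqP; rewrite oner_eq0.
exists (`|v ord0|^-1 *: v ord0); split; first exact: linear_setZ.
by rewrite normrZ normfV normr_id mulVf // normr_eq0.
Qed.

Definition opdist_le (del : R) (A B : X -> X) := forall x, `|A x - B x| <= del * `|x|.

Lemma opnorm_compact_close {W : set (X -> X)} {b : nat -> X -> X} {del : R} :
  opnorm_compact W -> (forall n, W (b n)) -> 0 < del ->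
  exists m n, (m < n)%N /\ opdist_le del (b n) (b m).
Proof.
move=> cW Wb del0; have [phi [L [phiM [WL cv]]]] := cW b Wb.
have [N HN] := cv (del / 2) (divr_gt0 del0 (ltr0n _ 2)).
exists (phi N), (phi N.+1); split => [|x]; first exact: phiM.
apply: le_trans (ler_distD (L x) _ _) _; rewrite [del]splitr mulrDl.
by rewrite [`|L x - _|]distrC; apply: lerD; apply: HN.
Qed.

Lemma opnorm_compact_net {W : set (X -> X)} {del : R} :
  opnorm_compact W -> 0 < del -> exists k (B : nat -> X -> X),
    (forall i, (i < k)%N -> W (B i)) /\
    forall B', W B' -> exists2 i, (i < k)%N & opdist_le del B' (B i).
Proof.
move=> cW del0; apply: contrapT => nonet.
have step (p : nat * (nat -> X -> X)) : exists B', (forall i, (i < p.1)%N -> W (p.2 i)) ->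
    W B' /\ forall i, (i < p.1)%N -> ~ opdist_le del B' (p.2 i).
  have [Wp|] := pselect (forall i, (i < p.1)%N -> W (p.2 i)); last by exists (fun _ => 0).
  apply: contrapT => nofar; apply: nonet; exists p.1, p.2; split => // B' WB'.
  apply: contrapT => far; apply: nofar; exists B' => _; split => // i ip close.
  by apply: far; exists i.
have [g Hg] := choice step.
(* F n enumerates the first n greedy choices b 0, ..., b (n-1). *)
pose F := fix F n : nat -> X -> X :=
  if n is n'.+1 then fun i => if (i < n')%N then F n' i else g (n', F n') else fun _ _ => 0.
pose b n := g (n, F n).
have Fb n i : (i < n)%N -> F n i = b i.
  elim: n => // n IH; rewrite ltnS leq_eqVlt /= => /orP [/eqP ->|ilt]; first by rewrite ltnn.
  by rewrite ilt IH.
have Wb n i : (i < n)%N -> W (b i).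
  elim: n i => // n IH i; rewrite ltnS leq_eqVlt => /orP [/eqP ->|]; last exact: IH.
  suff prefix : forall j, (j < n)%N -> W (F n j) by exact: (Hg (n, F n) prefix).1.
  by move=> j jn; rewrite Fb //; exact: IH.
have prefixW n i : (i < n)%N -> W (F n i) by move=> ilt; rewrite Fb //; exact: Wb ilt.
have [m [n [mn close]]] := opnorm_compact_close cW (fun n => Wb n.+1 n (ltnSn n)) del0.
by apply: ((Hg (n, F n) (prefixW n)).2 m mn); rewrite /= Fb.
Qed.

Lemma near_scalar_le {A : X -> X} {nu del eta : R} {Z : set X} {x : X} :
  (forall z, Z z -> `|A z - nu *: z| <= del * `|z|) -> Z x -> `|x| = 1 -> `|A x| <= eta ->
  forall z, Z z -> `|A z| <= (eta + 2 * del) * `|z|.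
Proof.
move=> near Zx x1 Ax z Zz.
have nu_le : `|nu| <= eta + del.
  have := ler_distD (A x) (nu *: x) 0; rewrite !subr0 distrC normrZ x1 mulr1.
  by have := near x Zx; rewrite x1 mulr1; lra.
have := ler_distD (nu *: z) (A z) 0; rewrite !subr0 normrZ.
have := near z Zz; have := ler_wpM2r (normr_ge0 z) nu_le; lra.
Qed.

Lemma scalar_plus_strictly_singular_family {k} {A : nat -> X -> X} :
  (forall T : X -> X, bounded_op T ->
     exists lambda : R, strictly_singular (fun x => T x - lambda *: x)) ->
  (forall i, (i < k)%N -> bounded_op (A i)) ->
  exists nu : nat -> R, forall i, (i < k)%N -> strictly_singular (fun x => A i x - nu i *: x).
Proof.
move=> decomp bA.
have pick i : exists nu : R, (i < k)%N -> strictly_singular (fun x => A i x - nu *: x).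
  have [ik|] := pselect (i < k)%N; last by exists 0.
  by have [nu Snu] := decomp _ (bA i ik); exists nu.
by have [nu Snu] := choice pick; exists nu.
Qed.

End Saturation.

Theorem theorem5p8 (R : realType) (X : completeNormedModType R) :
  (forall A : X -> X, bounded_op A ->
     exists lambda : R, strictly_singular (fun x => A x - lambda *: x)) ->
  UALS_saturated X.
Proof.
move=> decomp; exists 2; split => // W Wb _ Wk A bA eps eps0 Ax Y sY.
have del0 : 0 < eps / 3 by rewrite divr_gt0.
have [k [B [WB Bnet]]] := opnorm_compact_net Wk del0.
have [nu Snu] := scalar_plus_strictly_singular_family decomp
  (fun i ik => bounded_opB bA (Wb _ (WB i ik))).
have [Z [sZ ZY small]] := strictly_singular_family_small_on Snu sY del0.
have [x [Zx x1]] := subspace_unit sZ.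
have [B' [WB' AB'x]] : exists B', W B' /\ `|A x - B' x| <= eps by apply: Ax; rewrite x1.
have [i ik B'Bi] := Bnet B' WB'.
exists Z; split => //; exists (B i); split; first exact: WB.
have ABx : `|A x - B i x| <= eps + eps / 3.
  apply: le_trans (ler_distD (B' x) _ _) _; apply: lerD AB'x _.
  by have := B'Bi x; rewrite x1 mulr1.
move=> z Zz; apply: le_trans
  (near_scalar_le (A := fun x => A x - B i x) (small i ^~ ik) Zx x1 ABx _ Zz) _.
by apply: ler_wpM2r => //; lra.
Qed.
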